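(* Let $K(t,u)=1+\frac{14}{15}\sqrt[5]{4\left(t-\frac12\right)\left(u-\frac12\right)}$ for $t,u\in[0,1]$. The Hammerstein operator $(H_2f)(t)=\int_0^1K(t,u)f^2(u)\,du$ on $C[0,1]$ has at least two distinct strictly positive fixed points.
   Context: For real $s$, $\sqrt[5]{s}$ denotes the real fifth root (negative for $s<0$). *)

From Stdlib Require Import Reals Lra.
Open Scope R_scope.

Definition root5 (s : R) : R :=
  if Rlt_dec 0 s then Rpower s (1/5)
  else if Rlt_dec s 0 then - Rpower (- s) (1/5)
  else 0.

Definition K (t u : R) : R :=
  1 + 14/15 * root5 (4 * (t - 1/2) * (u - 1/2)).

Definition cont01 (f : R -> R) : Prop :=
  forall t, 0 <= t <= 1 -> limit1_in f (fun x => 0 <= x <= 1) (f t) t.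

Definition H2_fixed (f : R -> R) : Prop :=
  forall t, 0 <= t <= 1 ->
    exists pr : Riemann_integrable (fun u => K t u * (f u) ^ 2) 0 1,
      f t = RiemannInt pr.

Definition pos01 (f : R -> R) : Prop := forall t, 0 <= t <= 1 -> 0 < f t.

(* Look for fixed points in the two-parameter family
     profile a b u = a + b * root5(2u - 1).
   The substitution u = (1 + y^5)/2 maps [-1,1] onto [0,1], turns
   root5(2u-1) into y and K(t,u) into 1 + 14/15 * p * y with
   p = root5(2t-1); H_2 of a profile becomes the integral of an explicit
   polynomial in y, and only its even moments survive:
     H_2 (profile a b) = profile (a^2 + 5/7 b^2) (4/3 a b).
   The fixed-point system a = a^2 + 5/7 b^2, b = 4/3 a b has the solutions
   (1, 0) and (3/4, sqrt(21/80)), which are positive and distinct. *)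

From Stdlib Require Import Reals Lra Psatz.
From Coquelicot Require Import Coquelicot.
Open Scope R_scope.

Lemma pow5_lt_nonneg (x y : R) : 0 <= x < y -> x ^ 5 < y ^ 5.
Proof.
  intros Hxy.
  assert (y4_pos : 0 < y ^ 4) by (apply pow_lt; lra).
  assert (rest_nonneg : 0 <= y^3 * x + y^2 * x^2 + y * x^3 + x^4).
  { assert (0 <= x ^ 2) by nra. assert (0 <= y ^ 2) by nra. nra. }
  nra.
Qed.

Lemma pow5_lt (x y : R) : x < y -> x ^ 5 < y ^ 5.
Proof.
  intros Hxy.
  assert (odd : forall z, (- z) ^ 5 = - z ^ 5) by (intro; ring).
  destruct (Rle_or_lt 0 x) as [Hx | Hx]; [apply pow5_lt_nonneg; lra |].
  destruct (Rle_or_lt 0 y) as [Hy | Hy].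
  - assert (0 <= y ^ 5) by (apply pow_le; lra).
    assert (0 < (- x) ^ 5) by (apply pow_lt; lra).
    rewrite odd in *; lra.
  - assert ((- y) ^ 5 < (- x) ^ 5) by (apply pow5_lt_nonneg; lra).
    rewrite !odd in *; lra.
Qed.

Lemma pow5_inj (x y : R) : x ^ 5 = y ^ 5 -> x = y.
Proof.
  intros E; destruct (Rtotal_order x y) as [h | [h | h]]; auto;
    apply pow5_lt in h; lra.
Qed.

Lemma root5_pow (x : R) : root5 x ^ 5 = x.
Proof.
  assert (Rpower_fifth : forall z, 0 < z -> Rpower z (1/5) ^ 5 = z).
  { intros z Hz. rewrite <- Rpower_pow by (unfold Rpower; apply exp_pos).
    rewrite Rpower_mult. replace (1/5 * INR 5) with 1 by (simpl; field).
    apply Rpower_1; auto. }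
  unfold root5; destruct (Rlt_dec 0 x); [now apply Rpower_fifth |].
  destruct (Rlt_dec x 0); [| simpl; lra].
  replace ((- Rpower (- x) (1/5)) ^ 5) with (- Rpower (- x) (1/5) ^ 5) by ring.
  rewrite Rpower_fifth; lra.
Qed.

Lemma root5_of_pow (s : R) : root5 (s ^ 5) = s.
Proof. apply pow5_inj, root5_pow. Qed.

Lemma root5_mult (x y : R) : root5 (x * y) = root5 x * root5 y.
Proof. apply pow5_inj. now rewrite Rpow_mult_distr, !root5_pow. Qed.

Lemma root5_lt (x y : R) : x < y -> root5 x < root5 y.
Proof.
  intros Hxy. destruct (Rlt_or_le (root5 x) (root5 y)) as [h | h]; auto.
  assert (root5 y ^ 5 <= root5 x ^ 5).
  { destruct h as [h | h]; [left; now apply pow5_lt | rewrite h; lra]. }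
  rewrite !root5_pow in *; lra.
Qed.

Lemma root5_le (x y : R) : x <= y -> root5 x <= root5 y.
Proof. intros [h | h]; [left; now apply root5_lt | subst; lra]. Qed.

(* Continuity: the preimage of (a-eps, a+eps), a = root5 x0, is the
   interval ((a-eps)^5, (a+eps)^5), which contains x0. *)
Lemma root5_continuous (x0 : R) : continuity_pt root5 x0.
Proof.
  intros eps Heps. set (a := root5 x0).
  assert (lo : (a - eps) ^ 5 < x0)
    by (rewrite <- (root5_pow x0); apply pow5_lt; unfold a; lra).
  assert (hi : x0 < (a + eps) ^ 5)
    by (rewrite <- (root5_pow x0); apply pow5_lt; unfold a; lra).
  assert (r_lo : root5 ((a - eps) ^ 5) = a - eps) by apply root5_of_pow.
  assert (r_hi : root5 ((a + eps) ^ 5) = a + eps) by apply root5_of_pow.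
  set (p := (a - eps) ^ 5) in *; set (q := (a + eps) ^ 5) in *.
  clearbody p q.
  exists (Rmin (x0 - p) (q - x0)).
  split; [apply Rmin_pos; lra |].
  intros x [_ Hx]; simpl in *; unfold R_dist in *.
  pose proof (Rmin_l (x0 - p) (q - x0)).
  pose proof (Rmin_r (x0 - p) (q - x0)).
  apply Rabs_def2 in Hx.
  assert (root5 p < root5 x) by (apply root5_lt; lra).
  assert (root5 x < root5 q) by (apply root5_lt; lra).
  apply Rabs_def1; lra.
Qed.

Lemma root5_affine_continuous (a b z : R) :
  continuity_pt (fun u => root5 (a * u + b)) z.
Proof.
  apply (continuity_pt_comp (fun u => a * u + b) root5 z);
    [reg | apply root5_continuous].
Qed.

Definition profile (a b u : R) : R := a + b * root5 (2 * u - 1).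

Lemma profile_continuous (a b z : R) : continuity_pt (profile a b) z.
Proof.
  unfold profile.
  apply continuity_pt_plus; [apply continuity_pt_const; now intros ? ? |].
  apply continuity_pt_mult; [apply continuity_pt_const; now intros ? ? |].
  apply continuity_pt_ext with (fun u => root5 (2 * u + -1));
    [intro; f_equal; ring | apply root5_affine_continuous].
Qed.

Lemma kernel_continuous (t z : R) : continuity_pt (K t) z.
Proof.
  unfold K.
  apply continuity_pt_plus; [apply continuity_pt_const; now intros ? ? |].
  apply continuity_pt_mult; [apply continuity_pt_const; now intros ? ? |].
  apply continuity_pt_ext
    with (fun u => root5 (4 * (t - 1/2) * u + -2 * (t - 1/2)));
    [intro; f_equal; field | apply root5_affine_continuous].
Qed.

Lemma integrand_continuous (t : R) (f : R -> R) (z : R) :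
  continuity_pt f z -> continuity_pt (fun u => K t u * f u ^ 2) z.
Proof.
  intros Hf. apply continuity_pt_mult; [apply kernel_continuous |].
  apply continuity_pt_ext with (fun u => f u * (f u * 1)); [intro; simpl; ring |].
  apply continuity_pt_mult; auto.
  apply continuity_pt_mult; auto. apply continuity_pt_const; now intros ? ?.
Qed.

(* Change of variables u = (1 + y^5)/2, which straightens root5(2u-1). *)
Lemma RInt_fifth_power_substitution (F : R -> R) :
  (forall u, continuity_pt F u) ->
  RInt F 0 1 = RInt (fun y => 5/2 * y ^ 4 * F ((1 + y ^ 5) / 2)) (-1) 1.
Proof.
  intros HF.
  rewrite (RInt_comp F (fun y => (1 + y ^ 5) / 2) (fun y => 5/2 * y ^ 4)).
  - f_equal; simpl; field.
  - intros x _; apply continuity_pt_filterlim, HF.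
  - intros x _; split; [auto_derive; [auto | simpl; field] |].
    apply continuity_pt_filterlim; reg.
Qed.

Lemma kernel_substituted (t y : R) :
  K t ((1 + y ^ 5) / 2) = 1 + 14/15 * root5 (2 * t - 1) * y.
Proof.
  unfold K.
  replace (4 * (t - 1/2) * ((1 + y ^ 5) / 2 - 1/2)) with ((2 * t - 1) * y ^ 5)
    by field.
  now rewrite root5_mult, root5_of_pow, Rmult_assoc.
Qed.

Lemma profile_substituted (a b y : R) :
  profile a b ((1 + y ^ 5) / 2) = a + b * y.
Proof.
  unfold profile. replace (2 * ((1 + y ^ 5) / 2) - 1) with (y ^ 5) by field.
  now rewrite root5_of_pow.
Qed.

(* The resulting polynomial integral: only the even moments
   int y^4 = 2/5 and int y^6 = 2/7 over [-1,1] contribute. *)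
Lemma RInt_profile_polynomial (a b c : R) :
  RInt (fun y => 5/2 * y ^ 4 * ((1 + c * y) * (a + b * y) ^ 2)) (-1) 1
  = a ^ 2 + 5/7 * b ^ 2 + 10/7 * c * a * b.
Proof.
  set (G := fun y => 5/2 * (a^2 * y^5 / 5 + (2*a*b + c*a^2) * y^6 / 6
                          + (b^2 + 2*c*a*b) * y^7 / 7 + c * b^2 * y^8 / 8)).
  rewrite (is_RInt_unique _ (-1) 1 (minus (G 1) (G (-1)))).
  - unfold minus, plus, opp, G; simpl; field.
  - apply (@is_RInt_derive R_CompleteNormedModule).
    + intros x _; unfold G; auto_derive; [auto | field].
    + intros x _; apply continuity_pt_filterlim; reg.
Qed.

Lemma H2_profile (a b t : R) :
  RInt (fun u => K t u * profile a b u ^ 2) 0 1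
  = profile (a ^ 2 + 5/7 * b ^ 2) (4/3 * a * b) t.
Proof.
  rewrite RInt_fifth_power_substitution
    by (intro; apply integrand_continuous, profile_continuous).
  rewrite (RInt_ext _ (fun y => 5/2 * y ^ 4 *
             ((1 + (14/15 * root5 (2 * t - 1)) * y) * (a + b * y) ^ 2))).
  - rewrite RInt_profile_polynomial; unfold profile; simpl; field.
  - intros y _; now rewrite kernel_substituted, profile_substituted.
Qed.

Lemma profile_H2_fixed (a b : R) :
  a = a ^ 2 + 5/7 * b ^ 2 -> b = 4/3 * a * b -> H2_fixed (profile a b).
Proof.
  intros Ha Hb t _.
  assert (integrable : ex_RInt (fun u => K t u * profile a b u ^ 2) 0 1).
  { apply (@ex_RInt_continuous R_CompleteNormedModule); intros z _.
    apply continuity_pt_filterlim, integrand_continuous, profile_continuous. }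
  exists (ex_RInt_Reals_0 _ _ _ integrable).
  now rewrite <- RInt_Reals, H2_profile, <- Ha, <- Hb.
Qed.

Lemma continuous_cont01 (f : R -> R) :
  (forall t, continuity_pt f t) -> cont01 f.
Proof.
  intros Hf t _ eps Heps. destruct (Hf t eps Heps) as [d [Hd Hclose]].
  exists d; split; auto. intros x [_ Hx].
  destruct (Req_dec t x) as [<- | Htx].
  - simpl; unfold R_dist; rewrite Rminus_diag, Rabs_R0; lra.
  - apply Hclose; repeat split; auto.
Qed.

(* A profile with 0 <= b < a is positive on [0,1], as |root5(2u-1)| <= 1 there. *)
Lemma profile_pos01 (a b : R) : 0 <= b < a -> pos01 (profile a b).
Proof.
  intros Hab u Hu. unfold profile.
  assert (-1 <= root5 (2 * u - 1) <= 1).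
  { assert (root5 (-1) = -1)
      by (replace (-1) with ((-1) ^ 5) at 1 by ring; apply root5_of_pow).
    assert (root5 1 = 1) by (rewrite <- (pow1 5) at 1; apply root5_of_pow).
    split.
    - apply Rle_trans with (root5 (-1)); [lra | apply root5_le; lra].
    - apply Rle_trans with (root5 1); [apply root5_le; lra | lra]. }
  nra.
Qed.

Theorem proposition3p1 :
  exists f g : R -> R,
    cont01 f /\ cont01 g /\ pos01 f /\ pos01 g /\
    H2_fixed f /\ H2_fixed g /\
    exists t, 0 <= t <= 1 /\ f t <> g t.
Proof.
  set (b := sqrt (21/80)).
  assert (Hb2 : b ^ 2 = 21/80)
    by (unfold b; rewrite <- Rsqr_pow2; apply Rsqr_sqrt; lra).
  assert (Hb : 0 <= b < 3/4) by (split; [apply sqrt_pos | nra]).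
  exists (profile 1 0), (profile (3/4) b).
  split; [| split; [| split; [| split; [| split; [| split]]]]].
  - apply continuous_cont01, profile_continuous.
  - apply continuous_cont01, profile_continuous.
  - apply profile_pos01; lra.
  - apply profile_pos01; lra.
  - apply profile_H2_fixed; lra.
  - apply profile_H2_fixed; nra.
  - (* at t = 1 the profiles take the values 1 and 3/4 + b, and b <> 1/4 *)
    exists 1; split; [lra |].
    unfold profile; replace (2 * 1 - 1) with (1 ^ 5) by ring.
    rewrite root5_of_pow; intro E; nra.
Qed.
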